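(* Let $X$ be a compact metric space. Then $X$ is antipodal if and only if $\mathbf{E}(X)$ is convex as a subset of $C(X)$, the space of continuous real-valued functions on $X$.
   Context: A metric space $X$ is antipodal if for every $x\in X$ there exists $\bar x\in X$ with $d_X(x,\bar x)=d_X(x,y)+d_X(y,\bar x)$ for all $y\in X$. $\Delta(X)=\{f:X\to\mathbb{R}\text{ bounded}:f(x)+f(x')\ge d_X(x,x')\}$ and the tight span $\mathbf{E}(X)$ is the set of pointwise-minimal elements of $\Delta(X)$ (these are 1-Lipschitz, hence in $C(X)$). *)

From Stdlib Require Import Reals List.
Open Scope R_scope.

Definition is_metric {X : Type} (d : X -> X -> R) : Prop :=
  (forall x y, 0 <= d x y) /\
  (forall x y, d x y = 0 <-> x = y) /\
  (forall x y, d x y = d y x) /\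
  (forall x y z, d x z <= d x y + d y z).

Definition metric_open {X : Type} (d : X -> X -> R) (U : X -> Prop) : Prop :=
  forall x, U x -> exists e, 0 < e /\ forall y, d x y < e -> U y.

Definition metric_compact {X : Type} (d : X -> X -> R) : Prop :=
  forall (I : Type) (U : I -> X -> Prop),
    (forall i, metric_open d (U i)) ->
    (forall x, exists i, U i x) ->
    exists l : list I, forall x, exists i, In i l /\ U i x.

Definition antipodal {X : Type} (d : X -> X -> R) : Prop :=
  forall x, exists xbar, forall y, d x xbar = d x y + d y xbar.

Definition in_Delta {X : Type} (d : X -> X -> R) (f : X -> R) : Prop :=
  (exists M, forall x, Rabs (f x) <= M) /\
  (forall x x', f x + f x' >= d x x').

(* Tight span E(X): pointwise-minimal elements of Delta(X). *)
Definition in_tight_span {X : Type} (d : X -> X -> R) (f : X -> R) : Prop :=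
  in_Delta d f /\
  (forall g, in_Delta d g -> (forall x, g x <= f x) -> forall x, g x = f x).

Definition convex_fun_set {X : Type} (S : (X -> R) -> Prop) : Prop :=
  forall f g (t : R), S f -> S g -> 0 <= t <= 1 ->
    S (fun x => t * f x + (1 - t) * g x).

(* Every f in E(X) satisfies f x = sup_y (d x y - f y), so it is 1-Lipschitz
   and f x + f x' = d x x' whenever x' is an antipode of x. If X is antipodal,
   a convex combination h of points of E(X) therefore attains
   h x + h x' = d x x' at every x, and this equality pins down any smaller
   element of Delta(X): h is minimal. Conversely, let w be a farthest point
   from x (it exists by compactness) and y arbitrary. The midpoint
   h = (d w + d y) / 2 lies in E(X), so h x + h v is arbitrarily close to
   d x v for suitable v; combined with d x v <= d x w and the triangle
   inequality this forces d x y + d y w <= d x w, i.e. w is an antipode. *)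
From Stdlib Require Import Reals Lra List Classical ClassicalEpsilon.
Open Scope R_scope.

Lemma list_argmax {X : Type} (F : X -> R) (x0 : X) (l : list X) :
  exists w, forall i, In i l -> F i <= F w.
Proof.
  induction l as [|b l [w Hw]].
  - exists x0. intros i [].
  - destruct (Rle_dec (F b) (F w)).
    + exists w. intros i [<-|Hi]; auto.
    + exists b. intros i [<-|Hi]; [lra|]. specialize (Hw i Hi). lra.
Qed.

Section TightSpan.

Variables (X : Type) (d : X -> X -> R).
Hypothesis Hd : is_metric d.

Lemma dist_ge0 x y : 0 <= d x y.
Proof. apply Hd. Qed.

Lemma dist_refl x : d x x = 0.
Proof. apply Hd; reflexivity. Qed.

Lemma dist_sym x y : d x y = d y x.
Proof. apply Hd. Qed.

Lemma dist_triangle x y z : d x z <= d x y + d y z.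
Proof. apply Hd. Qed.

Lemma Delta_ge0 f : in_Delta d f -> forall x, 0 <= f x.
Proof.
  intros [_ Hf] x. specialize (Hf x x). rewrite dist_refl in Hf. lra.
Qed.

Lemma Delta_convex f g t :
  in_Delta d f -> in_Delta d g -> 0 <= t <= 1 ->
  in_Delta d (fun x => t * f x + (1 - t) * g x).
Proof.
  intros [[Mf HMf] Hf] [[Mg HMg] Hg] Ht. split.
  - exists (Mf + Mg). intro x.
    eapply Rle_trans; [apply Rabs_triang|].
    rewrite !Rabs_mult, (Rabs_pos_eq t), (Rabs_pos_eq (1 - t)) by lra.
    specialize (HMf x). specialize (HMg x).
    pose proof (Rabs_pos (f x)). pose proof (Rabs_pos (g x)). nra.
  - intros x x'. specialize (Hf x x'). specialize (Hg x x'). nra.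
Qed.

Definition fun_update (f : X -> R) (z : X) (c : R) (y : X) : R :=
  if excluded_middle_informative (y = z) then c else f y.

Lemma Delta_update f z c :
  in_Delta d f -> 0 <= c -> (forall y, d z y <= c + f y) ->
  in_Delta d (fun_update f z c).
Proof.
  intros [[M HM] Hf] Hc Hz. unfold fun_update. split.
  - exists (Rmax M c). intro x.
    destruct (excluded_middle_informative (x = z)).
    + rewrite Rabs_pos_eq by exact Hc. apply Rmax_r.
    + eapply Rle_trans; [apply HM | apply Rmax_l].
  - intros x x'.
    destruct (excluded_middle_informative (x = z)) as [->|];
    destruct (excluded_middle_informative (x' = z)) as [->|].
    + rewrite dist_refl. lra.
    + specialize (Hz x'). lra.
    + specialize (Hz x). rewrite dist_sym. lra.
    + apply Hf.
Qed.

Lemma tight_span_le f z c :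
  in_tight_span d f -> 0 <= c -> (forall y, d z y <= c + f y) -> f z <= c.
Proof.
  intros [HfD Hmin] Hc Hz.
  destruct (Rle_dec (f z) c) as [|Hlt]; [assumption|].
  assert (Hle : forall x, fun_update f z c x <= f x).
  { intro x. unfold fun_update.
    destruct (excluded_middle_informative (x = z)) as [->|]; lra. }
  specialize (Hmin _ (Delta_update f z c HfD Hc Hz) Hle z).
  unfold fun_update in Hmin.
  destruct (excluded_middle_informative (z = z)); [lra | contradiction].
Qed.

Lemma tight_span_lipschitz f a b :
  in_tight_span d f -> f a <= f b + d a b.
Proof.
  intros Hf. apply tight_span_le; [assumption| |].
  - pose proof (Delta_ge0 f (proj1 Hf) b). pose proof (dist_ge0 a b). lra.
  - intro y. pose proof (proj2 (proj1 Hf) b y). pose proof (dist_triangle a b y).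
    lra.
Qed.

Lemma tight_span_antipode f x x' :
  in_tight_span d f -> (forall y, d x x' = d x y + d y x') ->
  f x + f x' = d x x'.
Proof.
  intros Hf Hx'.
  assert (Hx'_le : f x' <= d x x').
  { apply tight_span_le; [assumption | apply dist_ge0 |].
    intro y. rewrite (Hx' y), (dist_sym x' y).
    pose proof (Delta_ge0 f (proj1 Hf) y). pose proof (dist_ge0 x y). lra. }
  assert (Hx_le : f x <= d x x' - f x').
  { apply tight_span_le; [assumption | lra |].
    intro y. rewrite (Hx' y).
    pose proof (tight_span_lipschitz f x' y Hf). rewrite (dist_sym x' y) in *.
    lra. }
  pose proof (proj2 (proj1 Hf) x x'). lra.
Qed.

Lemma tight_span_of_Delta_attained f :
  in_Delta d f -> (forall x, exists y, f x + f y = d x y) -> in_tight_span d f.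
Proof.
  intros HfD Hatt. split; [exact HfD|].
  intros g [_ Hg] Hle x. destruct (Hatt x) as [y Hy].
  specialize (Hg x y). pose proof (Hle x). pose proof (Hle y). lra.
Qed.

Lemma tight_span_approx_attained f x eps :
  in_tight_span d f -> 0 < eps -> exists y, f x + f y <= d x y + eps.
Proof.
  intros Hf Heps. apply NNPP. intro Hnone.
  assert (Hgt : forall y, d x y + eps < f x + f y).
  { intro y. apply Rnot_le_lt. intro Hy. apply Hnone. exists y. exact Hy. }
  assert (Hfx : f x <= f x - eps / 2).
  { apply tight_span_le; [assumption| |].
    - specialize (Hgt x). rewrite dist_refl in Hgt. lra.
    - intro y. specialize (Hgt y). lra. }
  lra.
Qed.

Hypothesis Hc : metric_compact d.

Lemma compact_farthest_point a : exists w, forall v, d a v <= d a w.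
Proof.
  apply NNPP. intro Hnone.
  assert (Hfarther : forall w, exists v, d a w < d a v).
  { intro w. apply NNPP. intro Hw. apply Hnone. exists w. intro v.
    apply Rnot_lt_le. intro Hv. apply Hw. exists v. exact Hv. }
  destruct (Hc X (fun w v => d a v < d a w)) as [l Hl].
  - intros w v Hv. exists (d a w - d a v). split; [lra|].
    intros y Hy. pose proof (dist_triangle a v y). lra.
  - exact Hfarther.
  - destruct (list_argmax (d a) a l) as [w Hw].
    destruct (Hl w) as [i [Hi Hwi]]. specialize (Hw i Hi). lra.
Qed.

Lemma dist_tight_span a : in_tight_span d (d a).
Proof.
  apply tight_span_of_Delta_attained.
  - destruct (compact_farthest_point a) as [w Hw]. split.
    + exists (d a w). intro x. rewrite Rabs_pos_eq by apply dist_ge0. apply Hw.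
    + intros x x'. pose proof (dist_triangle x a x'). rewrite (dist_sym x a) in *.
      lra.
  - intro x. exists a. rewrite dist_refl, dist_sym. lra.
Qed.

Lemma farthest_point_antipode x w :
  convex_fun_set (in_tight_span d) -> (forall v, d x v <= d x w) ->
  forall y, d x w = d x y + d y w.
Proof.
  intros Hconv Hw y.
  set (h := fun u => / 2 * d w u + (1 - / 2) * d y u).
  assert (Hh : in_tight_span d h) by (apply Hconv; [apply dist_tight_span.. | lra]).
  apply Rle_antisym; [apply dist_triangle|].
  rewrite <- (Rplus_0_r (d x w)). apply Rle_plus_epsilon. intros eps Heps.
  destruct (tight_span_approx_attained h x (eps / 2) Hh ltac:(lra)) as [v Hv].
  unfold h in Hv.
  pose proof (Hw v). pose proof (dist_triangle y v w).
  rewrite (dist_sym w x), (dist_sym y x), (dist_sym w v) in *.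
  lra.
Qed.

End TightSpan.

Theorem proposition2p26 (X : Type) (d : X -> X -> R)
  (Hd : is_metric d) (Hc : metric_compact d) :
  antipodal d <-> convex_fun_set (in_tight_span d).
Proof.
  split.
  - intros Hanti f g t Hf Hg Ht.
    apply tight_span_of_Delta_attained; [apply Delta_convex; [apply Hf | apply Hg | exact Ht]|].
    intro x. destruct (Hanti x) as [x' Hx']. exists x'.
    transitivity (t * (f x + f x') + (1 - t) * (g x + g x')); [ring|].
    rewrite (tight_span_antipode X d Hd f x x' Hf Hx'),
            (tight_span_antipode X d Hd g x x' Hg Hx').
    ring.
  - intros Hconv x.
    destruct (compact_farthest_point X d Hd Hc x) as [w Hw].
    exists w. exact (farthest_point_antipode X d Hd Hc x w Hconv Hw).
Qed.
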